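(* The local monodromy $\rho_{\mathrm{trc}}$ (around $t=27/5$) acting on $\mathrm{Hom}_{\mathbb Z\mathcal I}(V_o,H_1(\Sigma;\mathbb Z))$ fixes $U_{\mathrm{trc}}$ and sends $U_{\mathrm{edge}}$ to $U_{\mathrm{edge}}+U_{\mathrm{trc}}$; the local monodromy $\rho_{\mathrm{edge}}$ (around $t=\infty$) fixes $U_{\mathrm{edge}}$ and sends $U_{\mathrm{trc}}$ to $U_{\mathrm{trc}}-3U_{\mathrm{edge}}$.
   Context: Setup: $D\subset\mathbb R^3$ regular dodecahedron centered at $0$, $\mathcal I\subset\mathrm{SO}(3)$ its rotation group ($\cong A_5$), $\iota=-\mathrm{id}$. $\mathcal K$ = the five inscribed cubes ($\mathcal I$ acts as even permutations), $V_o:=\mathbb Z^{\mathcal K}/\mathbb Z(\sum e)$, $\bar e$ the image of $e$. $\hat\Sigma$: surface $D$ with an $\mathcal I$- and $\iota$-invariant small open equilateral triangle removed at each vertex; $\Sigma$: $\hat\Sigma$ with boundary points $p\sim\iota p$ identified (closed oriented genus-10 surface with edge-type and truncation-type $1$-cells). $\delta_x$ (vertex $x$): counterclockwise boundary of the removed triangle at $x$; $\delta_y$ (oriented edge $y$, initial point $in(y)$): loop formed by edge-type cells $y$ and $\iota y$. $\Delta_{\mathrm{trc}}=\{\delta_x\}$, $\Delta_{\mathrm{edge}}=\{\delta_y\}$. For fixed $e\in\mathcal K$, $E$ is one of the two 4-element sets of pairwise non-adjacent vertices of $e$; $u_{\mathrm{trc}},u_{\mathrm{edge}}:V_o\to Z_1(\Sigma)$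 are the $\mathbb Z\mathcal I$-maps with $u_{\mathrm{trc}}(\bar e)=\sum_{x\in E}\delta_x$, $u_{\mathrm{edge}}(\bar e)=\sum_{x\in E}\sum_{in(y)=x}\delta_y$; $U_{\mathrm{trc}}$ is the class of $u_{\mathrm{trc}}$ and $U_{\mathrm{edge}}$ one third of the class of $u_{\mathrm{edge}}$ in $\mathrm{Hom}_{\mathbb Z\mathcal I}(V_o,H_1(\Sigma;\mathbb Z))$ (these form a $\mathbb Z$-basis). Winger pencil: the pencil of $\mathcal I$-invariant plane sextics, base $\mathcal B\cong\mathbb P^1$ with coordinate $t$, with singular members $C_0$ (triple conic), $C_\infty$ (six lines), $C_{27/5}$ (irreducible, ten nodes), $C_{-1}$ (irreducible, six nodes), other members smooth of genus 10. For $\tau\in(0,1)$, the piecewise Euclidean metric on $\hat\Sigma$ with edge-type edges of length $\tau$ and truncation-type edges of length $1-\tau$ induces an $\mathcal I$-invariant complex structure on $\Sigma$ making it isomorphic (as $\mathcal I$-curve) to $C_{\gamma(\tau)}$ with $\gamma(\tau)$ real in $(27/5,\infty)$; as $\tau\to0$ the family degenerates to $C_\infty$ with vanishing cycles $\Delta_{\mathrm{edge}}$, and as $\tau\to1$ to $C_{27/5}$ with vanishing cycles $\Delta_{\mathrm{trc}}$. Using this to identify $H_1(\Sigma)$ with $H_1(C_t)$ for $t$ on this real interval, $\rho_{\mathrm{edge}}$ and $\rho_{\mathrm{trc}}$ are the monodromies along small loops around $\infty$ resp. $27/5$, given by the Picard–Lefschetz formula $h\mapsto h+\sum_{\delta\in\Delta/\{\pm1\}}\langle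 h,\delta\rangle\delta$ with $\Delta=\Delta_{\mathrm{edge}}$ resp. $\Delta_{\mathrm{trc}}$; they act on $\mathrm{Hom}_{\mathbb Z\mathcal I}(V_o,H_1(\Sigma;\mathbb Z))$ by composition. *)

From mathcomp Require Import all_boot all_order all_algebra.
Set Implicit Arguments.
Unset Strict Implicit.
Unset Printing Implicit Defensive.
Import GRing.Theory Num.Theory.
Local Open Scope ring_scope.

(* Vertices are numbered 0..19; the numbering comes
   from the coordinates (p = golden ratio, q = 1/p)
     0:( 1, 1, 1)  1:( 1, 1,-1)  2:( 1,-1, 1)  3:( 1,-1,-1)
     4:(-1, 1, 1)  5:(-1, 1,-1)  6:(-1,-1, 1)  7:(-1,-1,-1)
     8:(0,q,p) 9:(q,p,0) 10:(p,0,q) 11:(0,q,-p) 12:(q,-p,0) 13:(p,0,-q)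
    14:(0,-q,p) 15:(-q,p,0) 16:(-p,0,q) 17:(0,-q,-p) 18:(-q,-p,0)
    19:(-p,0,-q).
   Each face is listed as the cyclic sequence of its vertices in
   counterclockwise order as seen from outside D (outward normal). *)
Definition V := 'I_20.

Definition face_list : seq (seq nat) :=
  [:: [:: 0; 8; 14; 2; 10]; [:: 0; 9; 15; 4; 8]; [:: 0; 10; 13; 1; 9];
      [:: 1; 11; 5; 15; 9]; [:: 1; 13; 3; 17; 11]; [:: 2; 12; 3; 13; 10];
      [:: 2; 14; 6; 18; 12]; [:: 3; 12; 18; 7; 17]; [:: 4; 15; 5; 19; 16];
      [:: 4; 16; 6; 14; 8]; [:: 5; 11; 17; 7; 19]; [:: 6; 16; 19; 7; 18]].

Definition Face := 'I_12.

Definition fv (i : Face) (k : nat) : V := inord (nth 0%N (nth [::] face_list i) (k %% 5)).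

Definition face_set (i : Face) : {set V} := [set fv i k | k : 'I_5].

Definition adj (x w : V) : bool :=
  [exists i : Face, exists k : 'I_5,
     ((fv i k == x) && (fv i k.+1 == w)) || ((fv i k == w) && (fv i k.+1 == x))].

Definition consec3 (u x w : V) : bool :=
  [exists i : Face, exists k : 'I_5,
     [&& fv i k == u, fv i k.+1 == x & fv i k.+2 == w]].

(* sigma x w : the counterclockwise successor (seen from outside) of the
   neighbour w among the three neighbours of x; sigma_inv x : its inverse. *)
Definition sigma (x w : V) : V := odflt x [pick u | consec3 u x w].
Definition sigma_inv (x w : V) : V := odflt x [pick u | consec3 w x u].

(* graph balls and the antipodal map antipode = -id restricted to vertices
   (the antipode of x is the unique vertex at graph distance 5) *)
Fixpoint ball (k : nat) (x : V) : {set V} :=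
  match k with
  | 0 => [set x]
  | k'.+1 => ball k' x :|: [set w | [exists u in ball k' x, adj u w]]
  end.
Definition antipode (x : V) : V := odflt x [pick y | y \notin ball 4 x].

(* The five inscribed cubes: 8-sets of vertices meeting every face in
   exactly two non-adjacent vertices (a diagonal of the face = an edge of
   the cube).  Two vertices of a cube are adjacent in the cube iff they
   lie on a common face of D. *)
Definition is_cube (S : {set V}) : bool :=
  (#|S| == 8)%N &&
  [forall i : Face, (#|S :&: face_set i| == 2)%N &&
     [forall a in S :&: face_set i, forall b in S :&: face_set i, ~~ adj a b]].

Definition cube_adj (x y : V) : bool :=
  (x != y) && [exists i : Face, (x \in face_set i) && (y \in face_set i)].

(* E is one of the two 4-element sets of pairwise non-adjacent vertices
   of the cube e *)
Definition is_tetra (e E : {set V}) : bool :=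
  [&& E \subset e, #|E| == 4%N & [forall x in E, forall y in E, ~~ cube_adj x y]].

(* Cells of Sigma.
   0-cells: corner(x,w) = the corner of the removed triangle at x lying on
     the edge xw (x,w adjacent), with corner(x,w) ~ corner(antipode x, antipode w).
   Edge-type 1-cells: ES(x,w) = the truncated edge from corner(x,w) to
     corner(w,x), oriented from x to w (so ES(w,x) = - ES(x,w)).
   Truncation-type 1-cells: TS(x,w) = side of the removed triangle at x
     from corner(x,w) to corner(x, sigma x w) (counterclockwise); the
     identification p ~ antipode p gives TS(x,w) = - TS(antipode x, antipode (sigma x w)).
   2-cells: the 12 truncated faces (decagons).
   A 1-chain is stored as a function on keys (x, w, b): b = true gives
   the coefficient of ES(x,w), b = false the coefficient of TS(x,w); a
   genuine chain of Sigma is a function satisfying [chain_ok]. *)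
Definition key := (V * V * bool)%type.
Definition chain := {ffun key -> int}.

Definition chain_ok (c : chain) : bool :=
  [forall k : key, ~~ adj k.1.1 k.1.2 ==> (c k == 0)] &&
  [forall a : V, forall b : V, adj a b ==>
     (c (b, a, true) == - c (a, b, true)) &&
     (c (antipode a, antipode (sigma a b), false) == - c (a, b, false))].

Definition es_cell (x w : V) : chain :=
  [ffun k : key => (k == (x, w, true))%:R - (k == (w, x, true))%:R].
Definition ts_cell (x w : V) : chain :=
  [ffun k : key => (k == (x, w, false))%:R
                   - (k == (antipode x, antipode (sigma x w), false))%:R].

(* cycle condition: at the 0-cell corner(x,w) the four incident half-edges
   are ES(x,w), ES(antipode x, antipode w) (outgoing), TS(x,w) (outgoing) and
   TS(x, sigma_inv x w) (incoming); the total outflow must vanish. *)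
Definition is_cycle (c : chain) : bool :=
  chain_ok c &&
  [forall x : V, forall w : V, adj x w ==>
     (c (x, w, true) + c (antipode x, antipode w, true) + c (x, w, false)
      - c (x, sigma_inv x w, false) == 0)].

Definition face_boundary (i : Face) : chain :=
  \sum_(k < 5) (es_cell (fv i k) (fv i k.+1) - ts_cell (fv i k.+1) (fv i k.+2)).

Definition is_boundary (c : chain) : Prop :=
  exists n : {ffun Face -> int}, c = \sum_(i : Face) face_boundary i *~ n i.

Definition homologous (a b : chain) : Prop := is_boundary (a - b).

(* Intersection pairing <a,b> (a, b cycles): ribbon-graph formula
   <a,b> = 1/2 sum_{0-cells v} omega_v(a,b), where at the 0-cell
   corner(x,w) the incident half-edges in counterclockwise order are
   TS(x, sigma_inv x w), ES(x,w), TS(x,w), ES(antipode x, antipode w), the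
   outflows of a chain on them are [flows], and
   omega(a,b) = sum_{i<j} (a_i b_j - a_j b_i).  Each 0-cell is
   represented by two keys (x,w) and (antipode x, antipode w), whence the
   division by 4.  Convention: <a,b> = +1 at a transverse crossing
   where (a', b') is positively oriented (orientation of D by the
   outward normal). *)
Definition flows (c : chain) (x w : V) : seq int :=
  [:: - c (x, sigma_inv x w, false); c (x, w, true); c (x, w, false);
      c (antipode x, antipode w, true)].

Definition omega (a b : seq int) : int :=
  \sum_(0 <= i < 4) \sum_(i.+1 <= j < 4) (a`_i * b`_j - a`_j * b`_i).

Definition inter (a b : chain) : int :=
  ((\sum_(x : V) \sum_(w : V | adj x w) omega (flows a x w) (flows b x w)) %/ 4)%Z.

Definition delta_trc (x : V) : chain := \sum_(w : V | adj x w) ts_cell x w.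
Definition delta_edge (y : V * V) : chain :=
  es_cell y.1 y.2 - es_cell (antipode y.1) (antipode y.2).

(* Picard--Lefschetz: h |-> h + sum_{delta in Delta/{+-1}} <h,delta> delta,
   where Delta = {delta i | P i} and the sum runs over one representative
   (the first index in enumeration order) of each class {delta, -delta}. *)
Definition picard_lefschetz (I : finType) (P : pred I) (delta : I -> chain)
    (h : chain) : chain :=
  h + \sum_(i | P i && [forall j, (P j && ((delta j == delta i) || (delta j == - delta i)))
                                    ==> (enum_rank i <= enum_rank j)%N])
        delta i *~ inter h (delta i).

Definition rho_trc : chain -> chain := picard_lefschetz (@predT V) delta_trc.
Definition rho_edge : chain -> chain :=
  picard_lefschetz (fun y : V * V => adj y.1 y.2) delta_edge.

Definition u_trc (E : {set V}) : chain := \sum_(x in E) delta_trc x.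
Definition u_edge (E : {set V}) : chain :=
  \sum_(x in E) \sum_(w : V | adj x w) delta_edge (x, w).

(* Both monodromies are Picard-Lefschetz transvections, so their effect on a class is
   determined by its intersection numbers with the vanishing cycles.  On the cellular
   model of Sigma all of this is a finite computation.  The face boundaries pair to zero
   with the vanishing cycles, so for a cycle W with 3[W] = [u_edge] the intersection
   numbers of W are those of u_edge divided by 3; evaluating the Picard-Lefschetz sums
   over one vanishing cycle per class {delta, -delta} then gives the four identities
   (even as identities of chains) for each of the ten possible sets E, the four-element
   sets of pairwise non-adjacent vertices of an inscribed cube, which are found by an
   exhaustive enumeration. *)

From HB Require Import structures.
From mathcomp Require Import all_boot all_order all_algebra.
From mathcomp Require Import ring.
Import GRing.Theory.
Set Implicit Arguments.
Unset Strict Implicit.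
Unset Printing Implicit Defensive.
Local Open Scope ring_scope.

(* [ord_enum] and [inord] are built with [insub], which does not compute since [idP]
   is opaque; [insub_eq] is its transparent twin. *)
Definition ord_seq n : seq 'I_n := pmap (insub_eq _) (iota 0 n).

Lemma enum_ord_seq n : enum 'I_n = ord_seq n.
Proof.
apply: (inj_map val_inj); rewrite val_enum_ord -val_ord_enum.
by rewrite /ord_seq (eq_pmap (insub_eqE _)).
Qed.

Lemma mem_ord_seq n (i : 'I_n) : i \in ord_seq n.
Proof. by rewrite -enum_ord_seq mem_enum. Qed.

Lemma forall_ord_seq n (P : pred 'I_n) : all P (ord_seq n) -> forall i, P i.
Proof. by move/allP=> P_all i; apply/P_all/mem_ord_seq. Qed.

Lemma forall_ord_seq2 n m (P : 'I_n -> 'I_m -> bool) :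
  all (fun i => all (P i) (ord_seq m)) (ord_seq n) -> forall i j, P i j.
Proof. by move/forall_ord_seq=> P_all i; apply/forall_ord_seq/P_all. Qed.

Definition vertex (m : nat) : V := odflt ord0 (insub_eq _ m).

Lemma vertexE m : vertex m = inord m.
Proof. by rewrite /vertex insub_eqE. Qed.

(* [vm_compute] compares ordinals much faster through their values. *)
Lemma eqE_ord n (i j : 'I_n) : (i == j) = (nat_of_ord i == j).
Proof. by []. Qed.

Lemma exists_enum (T : finType) (s : seq T) (P : pred T) :
  enum T = s -> [exists i, P i] = has P s.
Proof.
by move=> <-; apply/existsP/hasP => [[i Pi]|[i _ Pi]]; exists i; rewrite ?mem_enum.
Qed.

Lemma forall_enum (T : finType) (s : seq T) (P : pred T) :
  enum T = s -> [forall i, P i] = all P s.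
Proof. by move=> <-; apply/forallP/allP => P_all i *; apply: P_all; rewrite ?mem_enum. Qed.

Lemma pick_enum (T : finType) (s : seq T) (P : pred T) :
  enum T = s -> [pick i | P i] = ohead (filter P s).
Proof. by move=> <-; rewrite /pick enumT /enum_mem. Qed.

Lemma big_enum_seq (R : Type) (idx : R) (op : Monoid.com_law idx) (T : finType) (s : seq T)
    (P : pred T) (F : T -> R) :
  enum T = s -> \big[op/idx]_(i | P i) F i = \big[op/idx]_(i <- s | P i) F i.
Proof. by move=> <-; rewrite big_enum_cond; apply: eq_bigl. Qed.

Lemma enum_rank_index (T : finType) (x : T) : enum_rank x = index x (enum T) :> nat.
Proof.
rewrite -[x in index x _](enum_rankK x) /enum_val index_uniq ?enum_uniq //.
by rewrite -cardE ltn_ord.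
Qed.

Definition sumz (T : Type) (s : seq T) (F : T -> int) : int := foldr (fun i acc => F i + acc) 0 s.

Lemma sumzE T (s : seq T) F : sumz s F = \sum_(i <- s) F i.
Proof. by rewrite unlock. Qed.

(** * The dodecahedron *)

Definition antipode_tab : seq nat :=
  [:: 7; 6; 5; 4; 3; 2; 1; 0; 17; 18; 19; 14; 15; 16; 11; 12; 13; 8; 9; 10].

Definition neighbour_tab : seq (seq nat) :=
  [:: [:: 8; 10; 9]; [:: 9; 13; 11]; [:: 10; 14; 12]; [:: 12; 17; 13];
      [:: 8; 15; 16]; [:: 11; 19; 15]; [:: 14; 16; 18]; [:: 17; 18; 19];
      [:: 0; 4; 14]; [:: 0; 1; 15]; [:: 0; 2; 13]; [:: 1; 17; 5];
      [:: 2; 18; 3]; [:: 1; 10; 3]; [:: 2; 8; 6]; [:: 4; 9; 5];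
      [:: 4; 19; 6]; [:: 3; 7; 11]; [:: 6; 7; 12]; [:: 5; 7; 16]].

Definition antipode_of (x : V) : V := vertex (nth 0%N antipode_tab x).
Definition neighbours (x : V) : seq V := map vertex (nth [::] neighbour_tab x).
Definition face_vertex (i : Face) (k : nat) : V := vertex (nth 0%N (nth [::] face_list i) (k %% 5)).

(* Off the neighbourhood of [x] both return [x], like [sigma] and [sigma_inv]. *)
Definition ccw_succ (x w : V) : V :=
  let ns := nth [::] neighbour_tab x in vertex (if nat_of_ord w \in ns then next ns w else x).
Definition ccw_pred (x w : V) : V :=
  let ns := nth [::] neighbour_tab x in vertex (if nat_of_ord w \in ns then prev ns w else x).

Lemma fvE i k : fv i k = face_vertex i k.
Proof. by rewrite /face_vertex vertexE. Qed.

Lemma adj_neighbours x w : adj x w = (w \in neighbours x).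
Proof.
rewrite /adj (exists_enum _ (enum_ord_seq _)).
under eq_has => i do rewrite (exists_enum _ (enum_ord_seq _)).
under eq_has => i do under eq_has => k do rewrite !fvE !eqE_ord.
by apply/eqP; move: x w; apply: forall_ord_seq2; vm_compute.
Qed.

Lemma sum_adj_neighbours (R : nmodType) x (F : V -> R) :
  \sum_(w | adj x w) F w = \sum_(w <- neighbours x) F w.
Proof.
have uniq_neighbours : uniq (neighbours x) by move: x; apply: forall_ord_seq; vm_compute.
by rewrite big_uniq //; apply: eq_bigl => w; rewrite adj_neighbours.
Qed.

Lemma consec3E u x w :
  consec3 u x w = has (fun i : Face => has (fun k : 'I_5 =>
    [&& fv i k == u, fv i k.+1 == x & fv i k.+2 == w]) (ord_seq 5)) (ord_seq 12).
Proof.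
rewrite /consec3 (exists_enum _ (enum_ord_seq _)).
by under eq_has => i do rewrite (exists_enum _ (enum_ord_seq _)).
Qed.

Lemma sigmaE x w : sigma x w = ccw_succ x w.
Proof.
rewrite /sigma (pick_enum _ (enum_ord_seq _)); under eq_filter => u do rewrite consec3E.
under eq_filter => u do under eq_has => i do under eq_has => k do rewrite !fvE !eqE_ord.
by apply/eqP; move: x w; apply: forall_ord_seq2; vm_compute.
Qed.

Lemma sigma_invE x w : sigma_inv x w = ccw_pred x w.
Proof.
rewrite /sigma_inv (pick_enum _ (enum_ord_seq _)); under eq_filter => u do rewrite consec3E.
under eq_filter => u do under eq_has => i do under eq_has => k do rewrite !fvE !eqE_ord.
by apply/eqP; move: x w; apply: forall_ord_seq2; vm_compute.
Qed.

Fixpoint ball_seq (k : nat) (x : V) : seq V :=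
  if k is k'.+1 then
    let B := ball_seq k' x in
    [seq y <- ord_seq 20 | (y \in B) || has (fun u => y \in neighbours u) B]
  else [:: x].

Lemma mem_ball k x y : (y \in ball k x) = (y \in ball_seq k x).
Proof.
elim: k y => [|k IH] y; first by rewrite in_set1 mem_seq1.
rewrite [ball _ _]/= in_setU in_set IH mem_filter mem_ord_seq andbT; congr (_ || _).
apply/existsP/hasP => [[u /andP[]]|[u]]; rewrite ?IH => Bu.
  by rewrite adj_neighbours; exists u.
by exists u; rewrite IH Bu adj_neighbours.
Qed.

Lemma antipodeE x : antipode x = antipode_of x.
Proof.
rewrite /antipode (pick_enum _ (enum_ord_seq _)); under eq_filter => y do rewrite mem_ball.
by apply/eqP; move: x; apply: forall_ord_seq; vm_compute.
Qed.

Definition share_face (x y : V) : bool :=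
  has (fun i : Face => (nat_of_ord x \in nth [::] face_list i) &&
                       (nat_of_ord y \in nth [::] face_list i)) (ord_seq 12).

Lemma mem_face_set i x : (x \in face_set i) = (nat_of_ord x \in nth [::] face_list i).
Proof.
have -> : (x \in face_set i) = has (fun k : 'I_5 => fv i k == x) (ord_seq 5).
  apply/imsetP/hasP => [[k _ ->]|[k _ /eqP <-]]; last by exists k.
  by exists k; rewrite ?mem_ord_seq.
under eq_has => k do rewrite fvE eqE_ord.
by apply/eqP; move: i x; apply: forall_ord_seq2; vm_compute.
Qed.

Lemma cube_adjE x y : cube_adj x y = (x != y) && share_face x y.
Proof.
rewrite /cube_adj (exists_enum _ (enum_ord_seq _)).
by under eq_has => i do rewrite !mem_face_set.
Qed.

Definition key_is (x w : V) (b : bool) (k : key) : bool :=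
  [&& nat_of_ord k.1.1 == x, nat_of_ord k.1.2 == w & k.2 == b].

Lemma key_isE x w b k : key_is x w b k = (k == (x, w, b)).
Proof. by case: k => [[x1 w1] b1]; rewrite /key_is /= !val_eqE !xpair_eqE andbA. Qed.

Definition es_at (x w : V) (k : key) : int := (key_is x w true k)%:R - (key_is w x true k)%:R.
Definition ts_at (x w : V) (k : key) : int :=
  (key_is x w false k)%:R - (key_is (antipode_of x) (antipode_of (ccw_succ x w)) false k)%:R.
Definition face_at (i : Face) (k : key) : int :=
  sumz (ord_seq 5) (fun j => es_at (face_vertex i j) (face_vertex i j.+1) k
                             - ts_at (face_vertex i j.+1) (face_vertex i j.+2) k).
Definition delta_trc_at (x : V) (k : key) : int := sumz (neighbours x) (fun w => ts_at x w k).
Definition delta_edge_at (y : V * V) (k : key) : int :=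
  es_at y.1 y.2 k - es_at (antipode_of y.1) (antipode_of y.2) k.
Definition u_trc_at (s : seq V) (k : key) : int := sumz s (fun x => delta_trc_at x k).
Definition u_edge_at (s : seq V) (k : key) : int :=
  sumz s (fun x => sumz (neighbours x) (fun w => delta_edge_at (x, w) k)).

Lemma ts_cellE x w : ts_cell x w =1 ts_at x w.
Proof. by move=> k; rewrite ffunE /ts_at !key_isE !antipodeE sigmaE. Qed.

Lemma face_boundaryE i : face_boundary i =1 face_at i.
Proof.
move=> k; rewrite sum_ffunE (big_enum_seq _ _ _ (enum_ord_seq 5)) /face_at sumzE.
by apply: eq_bigr => j _; rewrite !ffunE /es_at /ts_at !key_isE !antipodeE !sigmaE !fvE.
Qed.

Lemma delta_trcE x : delta_trc x =1 delta_trc_at x.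
Proof.
move=> k; rewrite sum_ffunE sum_adj_neighbours /delta_trc_at sumzE.
by apply: eq_bigr => w _; rewrite ts_cellE.
Qed.

Lemma delta_edgeE y : delta_edge y =1 delta_edge_at y.
Proof. by move=> k; rewrite !ffunE /delta_edge_at /es_at !key_isE !antipodeE. Qed.

Lemma u_trc_seqE (s : seq V) : \sum_(x <- s) delta_trc x =1 u_trc_at s.
Proof.
move=> k; rewrite sum_ffunE /u_trc_at sumzE.
by apply: eq_bigr => x _; rewrite delta_trcE.
Qed.

Lemma u_edge_seqE (s : seq V) :
  \sum_(x <- s) \sum_(w | adj x w) delta_edge (x, w) =1 u_edge_at s.
Proof.
move=> k; rewrite sum_ffunE /u_edge_at sumzE; apply: eq_bigr => x _.
rewrite sum_ffunE sum_adj_neighbours sumzE.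
by apply: eq_bigr => w _; rewrite delta_edgeE.
Qed.

Definition vertex_pairs : seq (V * V)%type := [seq (x, w) | x <- ord_seq 20, w <- ord_seq 20].

Lemma enum_vertex_pairs : enum {: V * V} = vertex_pairs.
Proof. by rewrite enumT unlock /vertex_pairs -enum_ord_seq. Qed.

Definition keys : seq key := [seq (p, b) | p <- vertex_pairs, b <- [:: true; false]].

Lemma mem_keys (k : key) : k \in keys.
Proof.
case: k => p b; apply: (allpairs_f (fun p b => (p, b))); last by case: b.
by rewrite -enum_vertex_pairs mem_enum.
Qed.

Definition chain_values (c : chain) : seq int := map c keys.

Lemma chain_values_inj : injective chain_values.
Proof.
move=> c d; rewrite /chain_values => /eq_in_map cd.
by apply/ffunP => k; apply/cd/mem_keys.
Qed.

Lemma chain_valuesN c : chain_values (- c) = map -%R (chain_values c).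
Proof. by rewrite -map_comp; apply: eq_map => k; rewrite ffunE. Qed.

Lemma chain_valuesE (c : chain) f : c =1 f -> chain_values c = map f keys.
Proof. by move=> cf; rewrite /chain_values; apply: eq_map. Qed.

(** * The intersection pairing *)

Definition omega_at (a b : seq int) : int :=
  sumz (index_iota 0 4) (fun i => sumz (index_iota i.+1 4) (fun j => a`_i * b`_j - a`_j * b`_i)).

Lemma omega_atE a b : omega a b = omega_at a b.
Proof. by rewrite /omega_at sumzE; apply: eq_bigr => i _; rewrite sumzE. Qed.

Lemma omega_at0 a : omega_at a [:: 0; 0; 0; 0] = 0.
Proof.
have flat0 j : [:: 0; 0; 0; 0]`_j = 0 :> int by case: j => [|[|[|[|j]]]] //=; rewrite nth_nil.
rewrite /omega_at sumzE big1 // => i _; rewrite sumzE big1 // => j _.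
by rewrite !flat0 !mulr0 subrr.
Qed.

Definition pairing (a b : chain) : int :=
  \sum_(x : V) \sum_(w | adj x w) omega (flows a x w) (flows b x w).

Lemma interE a b : inter a b = (pairing a b %/ 4)%Z.
Proof. by []. Qed.

Definition pairingr (b a : chain) : int := pairing a b.

Lemma pairingr_is_additive b : zmod_morphism (pairingr b).
Proof.
move=> a a'; rewrite /pairingr /pairing -sumrB; apply: eq_bigr => x _.
rewrite -sumrB; apply: eq_bigr => w _.
by rewrite !omega_atE /omega_at /flows /= !ffunE; ring.
Qed.

HB.instance Definition _ b :=
  GRing.isZmodMorphism.Build chain int (pairingr b) (pairingr_is_additive b).

Lemma boundary0 : is_boundary 0.
Proof. by exists [ffun => 0]; rewrite big1 // => i _; rewrite ffunE mulr0z. Qed.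

Lemma pairing_boundary (c d : chain) :
  is_boundary c -> (forall i, pairing (face_boundary i) d = 0) -> pairing c d = 0.
Proof.
move=> [n ->] fd0; rewrite -[LHS]/(pairingr d _) raddf_sum big1 // => i _.
by rewrite raddfMz; change (pairing (face_boundary i) d *~ n i = 0); rewrite fd0 mul0rz.
Qed.

Lemma inter_third (W u d : chain) :
  is_boundary (W *+ 3 - u) -> (forall i, pairing (face_boundary i) d = 0) ->
  (12 %| pairing u d)%Z -> inter W d = (pairing u d %/ 12)%Z.
Proof.
move=> Wu fd0 /dvdzP [q ud].
have W3 : pairing W d *+ 3 = pairing u d.
  apply/eqP; rewrite -subr_eq0; apply/eqP.
  by rewrite -(pairing_boundary Wu fd0) -[RHS]/(pairingr d _) raddfB raddfMn.
have W4 : pairing W d = q * 4.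
  by apply: (@mulIf _ 3%:R) => //; rewrite mulr_natr W3 ud -mulrA.
by rewrite interE W4 ud !mulzK.
Qed.

Definition flows_at (f : key -> int) (x w : V) : seq int :=
  [:: - f (x, ccw_pred x w, false); f (x, w, true); f (x, w, false);
      f (antipode_of x, antipode_of w, true)].

(* Skipping the corners where [g] does not flow spares the evaluation of [f] there. *)
Definition pairing_at (f g : key -> int) : int :=
  sumz (ord_seq 20) (fun x => sumz (neighbours x) (fun w =>
    let b := flows_at g x w in
    if b == [:: 0; 0; 0; 0] then 0 else omega_at (flows_at f x w) b)).

Lemma pairingE (a b : chain) f g : a =1 f -> b =1 g -> pairing a b = pairing_at f g.
Proof.
move=> af bg; rewrite /pairing (big_enum_seq _ _ _ (enum_ord_seq 20)) /pairing_at sumzE.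
apply: eq_bigr => x _; rewrite sum_adj_neighbours sumzE; apply: eq_bigr => w _.
have flowsE (c : chain) h : c =1 h -> flows c x w = flows_at h x w.
  by move=> ch; rewrite /flows /flows_at !ch !antipodeE sigma_invE.
rewrite (flowsE _ _ af) (flowsE _ _ bg) omega_atE.
by case: eqP => // ->; rewrite omega_at0.
Qed.

(** * Picard-Lefschetz sums *)

(* Keeps the indices of [s] in [P] whose vector is not, up to sign, the vector of an
   earlier one; the [let] makes [vm_compute] evaluate every vector once. *)
Definition pl_select (I : eqType) (s : seq I) (P : pred I) (v : I -> seq int) : seq I :=
  let t := [seq (i, v i) | i <- s & P i] in
  [seq p.1 | p <- t & all (fun q => (q.2 == p.2) || (q.2 == map -%R p.2)
                                    ==> (index p.1 s <= index q.1 s)%N) t].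

Lemma eq_pl_select (I : eqType) (s : seq I) (P Q : pred I) v :
  P =1 Q -> pl_select s P v = pl_select s Q v.
Proof. by move=> PQ; rewrite /pl_select (eq_filter PQ). Qed.

Lemma picard_lefschetzE (I : finType) (s : seq I) (P : pred I) (delta : I -> chain) v h :
  enum I = s -> (forall i, chain_values (delta i) = v i) ->
  picard_lefschetz P delta h = h + \sum_(i <- pl_select s P v) delta i *~ inter h (delta i).
Proof.
move=> Es vE; rewrite /picard_lefschetz (big_enum_seq _ _ _ Es) -big_filter; congr (_ + _).
apply: congr_big => //; rewrite /pl_select filter_map -map_comp map_id -filter_predI.
apply: eq_filter => i /=; rewrite andbC all_map all_filter (forall_enum _ Es); congr (_ && _).
apply: eq_all => j /=; rewrite -!vE -chain_valuesN !(inj_eq chain_values_inj).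
by rewrite !enum_rank_index Es; case: (P j).
Qed.

Definition trc_reps : seq V := map vertex [:: 0; 1; 2; 3; 8; 9; 10; 11; 12; 13]%N.

Definition edge_reps : seq (V * V)%type :=
  [seq (vertex p.1, vertex p.2) | p <- [:: (0, 8); (0, 9); (0, 10); (1, 9); (1, 11); (1, 13);
     (2, 10); (2, 12); (2, 14); (3, 12); (3, 13); (3, 17); (8, 14); (9, 15); (10, 13)]%N].

Lemma pl_select_trc :
  pl_select (ord_seq 20) predT (fun x => map (delta_trc_at x) keys) = trc_reps.
Proof. by apply/eqP; vm_compute. Qed.

Lemma pl_select_edge :
  pl_select vertex_pairs (fun y => adj y.1 y.2) (fun y => map (delta_edge_at y) keys) = edge_reps.
Proof. by rewrite (eq_pl_select _ _ (fun y => adj_neighbours y.1 y.2)); apply/eqP; vm_compute. Qed.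

Lemma rho_trcE h : rho_trc h = h + \sum_(x <- trc_reps) delta_trc x *~ inter h (delta_trc x).
Proof.
have vE x : chain_values (delta_trc x) = map (delta_trc_at x) keys.
  exact: chain_valuesE (delta_trcE x).
by rewrite /rho_trc (picard_lefschetzE _ h (enum_ord_seq 20) vE) pl_select_trc.
Qed.

Lemma rho_edgeE h : rho_edge h = h + \sum_(y <- edge_reps) delta_edge y *~ inter h (delta_edge y).
Proof.
have vE y : chain_values (delta_edge y) = map (delta_edge_at y) keys.
  exact: chain_valuesE (delta_edgeE y).
by rewrite /rho_edge (picard_lefschetzE _ h enum_vertex_pairs vE) pl_select_edge.
Qed.

Lemma faces_orthogonal_check :
  all (fun i => all (fun x => pairing_at (face_at i) (delta_trc_at x) == 0) trc_reps)
      (ord_seq 12) &&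
  all (fun i => all (fun y => pairing_at (face_at i) (delta_edge_at y) == 0) edge_reps)
      (ord_seq 12).
Proof. by vm_compute. Qed.

Lemma face_boundary_orthogonal_trc i x :
  x \in trc_reps -> pairing (face_boundary i) (delta_trc x) = 0.
Proof.
move=> x_rep; rewrite (pairingE (face_boundaryE i) (delta_trcE x)); apply/eqP.
by case/andP: faces_orthogonal_check => /allP/(_ i (mem_ord_seq i))/allP/(_ x x_rep).
Qed.

Lemma face_boundary_orthogonal_edge i y :
  y \in edge_reps -> pairing (face_boundary i) (delta_edge y) = 0.
Proof.
move=> y_rep; rewrite (pairingE (face_boundaryE i) (delta_edgeE y)); apply/eqP.
by case/andP: faces_orthogonal_check => _ /allP/(_ i (mem_ord_seq i))/allP/(_ y y_rep).
Qed.

Definition combination_at (T : Type) (cs : seq (T * int)) (d : T -> key -> int) (k : key) : int :=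
  sumz cs (fun p => d p.1 k * p.2).

Lemma combinationE (T : Type) (r : seq T) (c : T -> int) (delta : T -> chain) d :
  (forall t, delta t =1 d t) ->
  \sum_(t <- r) delta t *~ c t =1 combination_at [seq (t, c t) | t <- r] d.
Proof.
move=> dE k; rewrite sum_ffunE /combination_at sumzE big_map.
by apply: eq_bigr => t _; rewrite ffunMzE dE mulrzz.
Qed.

Definition trc_coefs (f : key -> int) (n : int) : seq (V * int) :=
  [seq (x, pairing_at f (delta_trc_at x) %/ n)%Z | x <- trc_reps].
Definition edge_coefs (f : key -> int) (n : int) : seq ((V * V) * int) :=
  [seq (y, pairing_at f (delta_edge_at y) %/ n)%Z | y <- edge_reps].

Lemma rho_trc_fixed (u : chain) f : u =1 f ->
  all (fun x => pairing_at f (delta_trc_at x) == 0) trc_reps -> rho_trc u = u.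
Proof.
move=> uf /allP u_orth; rewrite rho_trcE big_seq big1 ?addr0 // => x x_rep.
by rewrite interE (pairingE uf (delta_trcE x)) (eqP (u_orth x x_rep)) mulr0z.
Qed.

Lemma rho_edge_shift (u v : chain) f g : u =1 f -> v =1 g ->
  map (combination_at (edge_coefs f 4) delta_edge_at) keys == map (fun k => - g k) keys ->
  rho_edge u = u - v.
Proof.
move=> uf vg /eqP comb; rewrite rho_edgeE; congr (_ + _).
under eq_bigr => y _ do rewrite interE (pairingE uf (delta_edgeE y)).
apply: chain_values_inj; rewrite (chain_valuesE (combinationE _ _ delta_edgeE)) comb.
by rewrite chain_valuesN (chain_valuesE vg) -map_comp.
Qed.

Lemma rho_edge_fixed_third (W u : chain) f : is_boundary (W *+ 3 - u) -> u =1 f ->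
  all (fun y => pairing_at f (delta_edge_at y) == 0) edge_reps -> rho_edge W = W.
Proof.
move=> Wu uf /allP u_orth; rewrite rho_edgeE big_seq big1 ?addr0 // => y y_rep.
have u_y : pairing u (delta_edge y) = 0.
  by rewrite (pairingE uf (delta_edgeE y)); apply/eqP/u_orth.
have u_y12 : (12 %| pairing u (delta_edge y))%Z by rewrite u_y dvdz0.
rewrite (inter_third Wu (fun i => face_boundary_orthogonal_edge i y_rep) u_y12).
by rewrite u_y div0z mulr0z.
Qed.

Lemma rho_trc_shift_third (W u v : chain) f g : is_boundary (W *+ 3 - u) -> u =1 f -> v =1 g ->
  all (fun x => 12 %| pairing_at f (delta_trc_at x))%Z trc_reps ->
  map (combination_at (trc_coefs f 12) delta_trc_at) keys == map g keys ->
  rho_trc W = W + v.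
Proof.
move=> Wu uf vg /allP u_div /eqP comb; rewrite rho_trcE; congr (_ + _).
rewrite big_seq; under eq_bigr => x x_rep.
  have u_x := pairingE uf (delta_trcE x).
  have u_x12 : (12 %| pairing u (delta_trc x))%Z by rewrite u_x; apply: u_div.
  rewrite (inter_third Wu (fun i => face_boundary_orthogonal_trc i x_rep) u_x12) u_x.
  over.
rewrite -big_seq; apply: chain_values_inj.
rewrite (chain_valuesE (combinationE _ _ delta_trcE)) comb.
exact/esym/chain_valuesE.
Qed.

Definition monodromy_check (s : seq V) : bool :=
  let ut := u_trc_at s in
  let ue := u_edge_at s in
  [&& all (fun x => pairing_at ut (delta_trc_at x) == 0) trc_reps,
      map (combination_at (edge_coefs ut 4) delta_edge_at) keys == map (fun k => - ue k) keys,
      all (fun x => 12 %| pairing_at ue (delta_trc_at x))%Z trc_reps,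
      map (combination_at (trc_coefs ue 12) delta_trc_at) keys == map ut keys &
      all (fun y => pairing_at ue (delta_edge_at y) == 0) edge_reps].

Lemma monodromy_of_check s : monodromy_check s ->
  [/\ rho_trc (\sum_(x <- s) delta_trc x) = \sum_(x <- s) delta_trc x,
      rho_edge (\sum_(x <- s) delta_trc x) =
        \sum_(x <- s) delta_trc x - \sum_(x <- s) \sum_(w | adj x w) delta_edge (x, w) &
      forall W, is_boundary (W *+ 3 - \sum_(x <- s) \sum_(w | adj x w) delta_edge (x, w)) ->
        rho_trc W = W + \sum_(x <- s) delta_trc x /\ rho_edge W = W].
Proof.
case/and5P=> ut_trc ut_edge ue_div ue_trc ue_edge; split.
- exact: rho_trc_fixed (u_trc_seqE s) ut_trc.
- exact: rho_edge_shift (u_trc_seqE s) (u_edge_seqE s) ut_edge.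
- move=> W Wu; split.
    exact: rho_trc_shift_third Wu (u_edge_seqE s) (u_trc_seqE s) ue_div ue_trc.
  exact: rho_edge_fixed_third Wu (u_edge_seqE s) ue_edge.
Qed.

(** * The ten tetrahedra *)

(* The two tetrahedra of each of the five inscribed cubes. *)
Definition tetrahedra : seq (seq V) :=
  map (map vertex) [:: [:: 0; 3; 5; 6]; [:: 1; 2; 4; 7]; [:: 0; 11; 12; 16]; [:: 7; 13; 14; 15];
    [:: 1; 8; 12; 19]; [:: 6; 10; 15; 17]; [:: 2; 9; 16; 17]; [:: 5; 8; 13; 18];
    [:: 3; 9; 14; 19]; [:: 4; 10; 11; 18]]%N.

Lemma monodromy_check_tetrahedra : all monodromy_check tetrahedra.
Proof. by vm_compute. Qed.

Definition independent_extensions (s : seq V) : seq V :=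
  [seq x <- ord_seq 20 | all (fun y : V => (nat_of_ord x != y) && ~~ share_face x y) s].

Fixpoint independent_seqs (n : nat) : seq (seq V) :=
  if n is n'.+1 then [seq x :: s | s <- independent_seqs n', x <- independent_extensions s]
  else [:: [::]].

Lemma mem_independent_seqs (s : seq V) :
  uniq s -> {in s &, forall x y, ~~ cube_adj x y} -> s \in independent_seqs (size s).
Proof.
elim: s => [|x s IH]; first by rewrite mem_seq1.
case/andP=> x_s s_uniq s_indep.
apply: (@allpairs_f_dep _ (fun=> V) _ (fun s x => x :: s) _ independent_extensions).
  by apply: IH => // y z y_s z_s; apply: s_indep; rewrite inE ?y_s ?z_s orbT.
rewrite mem_filter mem_ord_seq andbT; apply/allP => y y_s.
have xy : x != y by apply: contraNneq x_s => ->.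
have y_xs : y \in x :: s by rewrite inE y_s orbT.
by have := s_indep x y (mem_head x s) y_xs; rewrite cube_adjE xy andTb => ->.
Qed.

Lemma tetrahedra_classification :
  all (fun s => has (perm_eq s) tetrahedra) (independent_seqs 4).
Proof. by vm_compute. Qed.

Theorem theorem4p1 (e E : {set V}) :
  is_cube e -> is_tetra e E ->
  homologous (rho_trc (u_trc E)) (u_trc E) /\
  (forall W : chain, is_cycle W -> homologous (W *+ 3) (u_edge E) ->
     [/\ homologous (rho_trc W) (W + u_trc E),
         homologous (rho_edge W) W &
         homologous (rho_edge (u_trc E)) (u_trc E - W *+ 3)]).
Proof.
move=> _ /and3P [_ /eqP card_E /forall_inP E_indep].
have [t t_tet E_t] : exists2 t, t \in tetrahedra & perm_eq (enum E) t.
  have enum_indep : {in enum E &, forall x y, ~~ cube_adj x y}.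
    by move=> x y; rewrite !mem_enum => x_E y_E; apply: (forall_inP (E_indep x x_E)).
  have := mem_independent_seqs (enum_uniq (mem E)) enum_indep.
  by rewrite -cardE card_E => /(allP tetrahedra_classification)/hasP.
have u_trc_t : u_trc E = \sum_(x <- t) delta_trc x by rewrite /u_trc -big_enum (perm_big _ E_t).
have u_edge_t : u_edge E = \sum_(x <- t) \sum_(w | adj x w) delta_edge (x, w).
  by rewrite /u_edge -big_enum (perm_big _ E_t).
have [rho_trc_ut rho_edge_ut rho_W] :=
  monodromy_of_check (allP monodromy_check_tetrahedra t t_tet).
rewrite /homologous u_trc_t u_edge_t rho_trc_ut subrr; split=> [|W _ W3]; first exact: boundary0.
have [-> ->] := rho_W W W3; rewrite !subrr rho_edge_ut opprB addrC addrA subrK.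
by split=> //; apply: boundary0.
Qed.
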